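(* $\theta_n(B_n)\asymp\sqrt n$, i.e. there exist constants $c_1,c_2>0$ not depending on $n$ such that $c_1\sqrt n\le\theta_n(B_n)\le c_2\sqrt n$ for all $n\in\mathbb{N}$.
   Context: $B_n=\{x\in\mathbb{R}^n:\|x\|\le1\}$ (Euclidean norm). $C(B_n)$ is the space of continuous real functions on $B_n$ with the max norm; $\Pi_1(\mathbb{R}^n)$ is the set of polynomials in $n$ variables of degree at most $1$. For a nondegenerate simplex $S\subset B_n$ with vertices $x^{(1)},\dots,x^{(n+1)}$, the corresponding interpolation projector $P:C(B_n)\to\Pi_1(\mathbb{R}^n)$ is defined by $Pf(x^{(j)})=f(x^{(j)})$, and $\|P\|_{B_n}$ is its operator norm on $C(B_n)$. $\theta_n(B_n)$ is the minimal value of $\|P\|_{B_n}$ over all nondegenerate simplices with vertices in $B_n$. *)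

From HB Require Import structures.
From mathcomp Require Import all_boot all_order all_algebra.
From mathcomp Require Import all_classical all_reals all_analysis.
Set Implicit Arguments. Unset Strict Implicit. Unset Printing Implicit Defensive.
Import Order.TTheory GRing.Theory Num.Theory.
Import numFieldNormedType.Exports.
Local Open Scope classical_set_scope.
Local Open Scope ring_scope.

Section Defs.
Variable R : realType.

Definition enorm (n : nat) (x : 'rV[R]_n) : R := Num.sqrt (\sum_i x 0 i ^+ 2).

Definition Bn (n : nat) : set 'rV[R]_n := [set x | enorm x <= 1].

Definition affine_fun (n : nat) (a : 'rV[R]_n) (b : R) (x : 'rV[R]_n) : R :=
  \sum_i a 0 i * x 0 i + b.

(* simplex = n+1 vertices; nondegenerate iff det of the matrix with rows
   (x^(j), 1) is nonzero *)
Definition simplex_matrix (n : nat) (v : 'I_n.+1 -> 'rV[R]_n) : 'M[R]_n.+1 :=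
  \matrix_(i < n.+1, j < n.+1)
     (if unlift ord_max j is Some k then v i 0 k else 1).

Definition nondegenerate (n : nat) (v : 'I_n.+1 -> 'rV[R]_n) : Prop :=
  \det (simplex_matrix v) != 0.

(* Pf = the polynomial p in Pi_1 with p(x^(j)) = f(x^(j)) for all j
   (unique for a nondegenerate simplex). *)
Definition proj_norm (n : nat) (v : 'I_n.+1 -> 'rV[R]_n) : \bar R :=
  ereal_sup [set r : \bar R |
    exists (f : 'rV[R]_n -> R) (a : 'rV[R]_n) (b : R) (z : 'rV[R]_n),
      [/\ {within (@Bn n), continuous f},
          (forall y, (@Bn n) y -> `|f y| <= 1),
          (forall j, affine_fun a b (v j) = f (v j)),
          (@Bn n) z &
          r = (`| affine_fun a b z |)%:E]].

Definition theta (n : nat) : \bar R :=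
  ereal_inf [set proj_norm v | v in
     [set v : 'I_n.+1 -> 'rV[R]_n | (forall j, (@Bn n) (v j)) /\ nondegenerate v]].

End Defs.

(* A polynomial p of degree 1 taking values +-1 at the vertices of S is the
   image under P of a continuous f with |f| <= 1 on B_n (p clamped to [-1, 1]),
   so ||P|| >= max_{B_n} |p| >= |grad p|.  Write p = sum_j s_j lambda_j in the
   Lagrange basis of S: each |grad lambda_j| >= 1/2, since lambda_j rises by 1
   between two points of B_n, at distance at most 2; choosing the signs s_j one
   at a time so that no cross term is negative gives
   |grad p|^2 >= sum_j |grad lambda_j|^2 >= (n + 1) / 4.
   Conversely, for the simplex with vertices e_1, ..., e_n, 0 we have
   Pf(x) = f(0) + sum_k (f(e_k) - f(0)) x_k, so |Pf| <= 1 + 2 |x|_1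
   <= 1 + 2 sqrt n on B_n. *)

From Pilot Require Import Defs.
From HB Require Import structures.
From mathcomp Require Import all_boot all_order all_algebra.
From mathcomp Require Import all_classical all_reals all_analysis.
From mathcomp Require Import ring lra.
Import Order.TTheory GRing.Theory Num.Theory.
Import numFieldNormedType.Exports.
Local Open Scope ring_scope.

Section SumsOfSquares.
Context {R : realDomainType}.

Lemma CauchySchwarz_sum {I : finType} (x y : I -> R) :
  (\sum_i x i * y i) ^+ 2 <= (\sum_i x i ^+ 2) * (\sum_i y i ^+ 2).
Proof.
set A := \sum_i x i ^+ 2; set B := \sum_i x i * y i; set C := \sum_i y i ^+ 2.
have A_ge0 : 0 <= A by rewrite sumr_ge0 // => i _; rewrite sqr_ge0.
have [A0|A_neq0] := eqVneq A 0.
  have x0 i : x i = 0.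
    apply/eqP; rewrite -sqrf_eq0; apply/eqP.
    by apply: (psumr_eq0P _ A0) => // j _; rewrite sqr_ge0.
  by rewrite /B big1 ?expr0n ?A0 ?mul0r // => i _; rewrite x0 mul0r.
have A_gt0 : 0 < A by rewrite lt_def A_neq0.
(* [0 <= sum_i (A y_i - B x_i)^2 = A (A C - B^2)] with [A > 0]. *)
have : 0 <= \sum_i (A * y i - B * x i) ^+ 2 by rewrite sumr_ge0 // => i _; rewrite sqr_ge0.
have -> : \sum_i (A * y i - B * x i) ^+ 2 = A * (A * C - B ^+ 2).
  rewrite (eq_bigr (fun i => A ^+ 2 * y i ^+ 2 - 2 * A * B * (x i * y i)
                            + B ^+ 2 * x i ^+ 2)); last by move=> i _; ring.
  by rewrite big_split sumrB /= -!mulr_sumr -/A -/B -/C; ring.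
by rewrite pmulr_rge0 // subr_ge0.
Qed.

Lemma exists_signs_sum_sqr_ge {I : finType} {m : nat} (G : 'I_m -> I -> R) :
  exists2 s : 'I_m -> R, (forall j, `|s j| = 1) &
    \sum_j \sum_i G j i ^+ 2 <= \sum_i (\sum_j s j * G j i) ^+ 2.
Proof.
elim: m G => [|m IHm] G.
  exists (fun=> 1) => [j|]; first by rewrite normr1.
  by rewrite big_ord0 sumr_ge0 // => i _; rewrite sqr_ge0.
have [s' s'1 le_s'] := IHm (fun j => G (lift ord0 j)).
pose S i := \sum_j s' j * G (lift ord0 j) i.
(* the new sign makes the cross term with the previous sum nonnegative *)
pose t : R := if 0 <= \sum_i G ord0 i * S i then 1 else -1.
exists (fun j => if unlift ord0 j is Some j' then s' j' else t).
  move=> j; case: unliftP => [j' _|_]; first exact: s'1.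
  by rewrite /t; case: ifP; rewrite ?normrN normr1.
have t2 : t ^+ 2 = 1 by rewrite /t; case: ifP; rewrite ?sqrrN expr1n.
have cross_ge0 : 0 <= t * \sum_i G ord0 i * S i.
  by rewrite /t; case: ifPn; rewrite ?mul1r // mulN1r oppr_ge0 -ltNge => /ltW.
have -> : \sum_i (\sum_j (if unlift ord0 j is Some j' then s' j' else t) * G j i) ^+ 2
          = \sum_i (t * G ord0 i + S i) ^+ 2.
  apply: eq_bigr => i _; rewrite big_ord_recl unlift_none; congr ((_ + _) ^+ 2).
  by apply: eq_bigr => j _; rewrite liftK.
rewrite (eq_bigr (fun i => G ord0 i ^+ 2 + 2 * (t * (G ord0 i * S i)) + S i ^+ 2));
  last by move=> i _; rewrite sqrrD exprMn t2; ring.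
by rewrite !big_split /= -!mulr_sumr big_ord_recl /=; lra.
Qed.

End SumsOfSquares.

Section EuclideanBall.
Context {R : realType} {n : nat}.

Lemma ler_sqrtr_of_sqr (x y : R) : 0 <= x -> x ^+ 2 <= y -> x <= Num.sqrt y.
Proof. by move=> x_ge0 le_xy; rewrite -(ger0_norm x_ge0) -sqrtr_sqr ler_wsqrtr. Qed.

Lemma enorm_sqr (x : 'rV[R]_n) : enorm x ^+ 2 = \sum_i x 0 i ^+ 2.
Proof. by rewrite sqr_sqrtr // sumr_ge0 // => i _; rewrite sqr_ge0. Qed.

Lemma BnE (x : 'rV[R]_n) : Bn x = (\sum_i x 0 i ^+ 2 <= 1).
Proof. by rewrite /Bn /= /enorm -[in X in X = _]sqrtr1 ler_sqrt. Qed.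

Lemma sum_norm_le_sqrt_enorm (x : 'rV[R]_n) :
  \sum_i `|x 0 i| <= Num.sqrt n%:R * enorm x.
Proof.
rewrite /enorm -sqrtrM // ler_sqrtr_of_sqr ?sumr_ge0 //.
have := CauchySchwarz_sum (fun=> 1) (fun i => `|x 0 i|).
under eq_bigr do rewrite mul1r.
have -> : \sum_(i < n) (1 : R) ^+ 2 = n%:R.
  by rewrite (eq_bigr (fun=> 1)) ?sumr_const ?card_ord // => i _; rewrite expr1n.
suff -> : \sum_i `|x 0 i| ^+ 2 = \sum_i x 0 i ^+ 2 by [].
by apply: eq_bigr => i _; rewrite real_normK ?num_real.
Qed.

End EuclideanBall.

Section AffineFunctions.
Context {R : realType} {n : nat}.

Lemma affine_fun_continuous (a : 'rV[R]_n) b : continuous (affine_fun a b).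
Proof.
move=> x; apply: continuousD; last exact: cst_continuous.
apply: continuous_big => [|i _]; first exact: add_continuous.
move=> y; apply: (@continuousM _ _ (fun=> a 0 i) (fun z : 'rV[R]_n => z 0 i)).
  exact: cst_continuous.
exact: coord_continuous.
Qed.

Lemma exists_Bn_affine_ge_enorm (a : 'rV[R]_n) (b : R) :
  exists2 z, Bn z & enorm a <= `|affine_fun a b z|.
Proof.
set N := enorm a; have N_ge0 : 0 <= N := sqrtr_ge0 _.
have [N0|N_neq0] := eqVneq N 0.
  exists 0; last by rewrite N0.
  by rewrite BnE big1 // => i _; rewrite mxE expr0n.
pose e : R := if 0 <= b then 1 else -1.
have e2 : e ^+ 2 = 1 by rewrite /e; case: ifP; rewrite ?sqrrN expr1n.
exists ((e / N) *: a).
  rewrite BnE; under eq_bigr do rewrite mxE exprMn.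
  by rewrite -mulr_sumr -enorm_sqr -exprMn divfK // e2.
have -> : affine_fun a b ((e / N) *: a) = e * N + b.
  rewrite /affine_fun; congr (_ + _).
  under eq_bigr do rewrite mxE mulrCA -expr2.
  by rewrite -mulr_sumr -enorm_sqr expr2 mulrA divfK.
rewrite ler_normr /e; case: ifPn => [b_ge0|]; last rewrite -ltNge => b_lt0.
  by apply/orP; left; lra.
by apply/orP; right; lra.
Qed.

Lemma affine_jump_sqr_grad_ge (a : 'rV[R]_n) b x y : Bn x -> Bn y ->
  affine_fun a b x - affine_fun a b y = 1 -> 1 / 4 <= \sum_k a 0 k ^+ 2.
Proof.
rewrite !BnE => Bx By jump.
have dot : \sum_k a 0 k * (x 0 k - y 0 k) = 1.
  by rewrite -jump /affine_fun; under eq_bigr do rewrite mulrBr; rewrite sumrB; ring.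
have dist : \sum_k (x 0 k - y 0 k) ^+ 2 <= 4.
  apply: (@le_trans _ _ (\sum_k (2 * x 0 k ^+ 2 + 2 * y 0 k ^+ 2))).
    apply: ler_sum => k _; rewrite -subr_ge0.
    by rewrite (_ : _ - _ = (x 0 k + y 0 k) ^+ 2) ?sqr_ge0 //; ring.
  by rewrite big_split /= -!mulr_sumr; lra.
have A_ge0 : 0 <= \sum_k a 0 k ^+ 2 by rewrite sumr_ge0 // => k _; rewrite sqr_ge0.
have := CauchySchwarz_sum (fun k => a 0 k) (fun k => x 0 k - y 0 k).
rewrite dot expr1n; have := ler_wpM2l A_ge0 dist; lra.
Qed.

End AffineFunctions.

Section Clamp.
Context {R : realType}.

Definition clamp1 (x : R) : R := Num.max (-1) (Num.min 1 x).

Lemma continuous_clamp1 : continuous clamp1.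
Proof.
move=> x; apply: (@continuous_max R R^o (fun=> -1) ((fun=> 1) \min id)).
  exact: cst_continuous.
by apply: continuous_min; [exact: cst_continuous | exact: cvg_id].
Qed.

Lemma norm_clamp1_le1 x : `|clamp1 x| <= 1.
Proof. by rewrite ler_norml le_max ge_max ge_min !lexx (le_trans (lerN10 R) ler01). Qed.

Lemma clamp1_id x : `|x| <= 1 -> clamp1 x = x.
Proof. by rewrite ler_norml => /andP[? ?]; rewrite /clamp1 min_r // max_r. Qed.

End Clamp.

Section InterpolationProjector.
Context {R : realType}.

Lemma proj_norm_ge n (v : 'I_n.+1 -> 'rV[R]_n) a b z :
  (forall j, `|affine_fun a b (v j)| <= 1) -> Bn z ->
  ((`|affine_fun a b z|)%:E <= proj_norm v)%E.
Proof.
(* clamping p to [-1, 1] changes nothing at the vertices *)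
move=> vals_le1 Bz; apply: ereal_sup_ubound.
exists (clamp1 \o affine_fun a b), a, b, z; split => //.
- apply: continuous_subspaceT => x.
  by apply: continuous_comp; [exact: affine_fun_continuous | exact: continuous_clamp1].
- by move=> y _; exact: norm_clamp1_le1.
- by move=> j /=; rewrite clamp1_id.
Qed.

Definition affine_of_col {n} (c : 'cV[R]_n.+1) : 'rV[R]_n -> R :=
  affine_fun (\row_k c (lift ord_max k) 0) (c ord_max 0).

Lemma affine_of_col_vertex n (v : 'I_n.+1 -> 'rV[R]_n) c i :
  affine_of_col c (v i) = (simplex_matrix v *m c) i 0.
Proof.
rewrite /affine_of_col /affine_fun mxE big_ord_recr /= !mxE unlift_none mul1r.
congr (_ + _); apply: eq_bigr => k _.
have -> : widen_ord (leqnSn n) k = lift ord_max k.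
  by apply: val_inj; rewrite /= /bump leqNgt ltn_ord.
by rewrite !mxE liftK mulrC.
Qed.

End InterpolationProjector.

Section LowerBound.
Context {R : realType} {n : nat} (v : 'I_n.+1 -> 'rV[R]_n).
Hypotheses (n_gt0 : (0 < n)%N) (v_Bn : forall j, Bn (v j)) (v_nondeg : Defs.nondegenerate v).

Let C := invmx (simplex_matrix v).

Let MC : simplex_matrix v *m C = 1%:M.
Proof. by rewrite mulmxV // unitmxE unitfE. Qed.

(* Column j of C holds the coefficients of the Lagrange basis function
   lambda_j, with lambda_j (v i) = (i == j). *)
Lemma lagrange_sqr_grad_ge j : 1 / 4 <= \sum_k C (lift ord_max k) j ^+ 2.
Proof.
have lagrange i : affine_of_col (col j C) (v i) = (i == j)%:R.
  by rewrite affine_of_col_vertex colE mulmxA MC mul1mx mxE eqxx andbT.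
have [i ij] : exists i, i != j.
  have [->|j_neq0] := eqVneq j ord0; last by exists ord0; rewrite eq_sym.
  by exists ord_max; apply/eqP => /(congr1 val) /= n0; have := n_gt0; rewrite n0.
have jump : affine_of_col (col j C) (v j) - affine_of_col (col j C) (v i) = 1.
  by rewrite !lagrange eqxx (negbTE ij) subr0.
suff -> : \sum_k C (lift ord_max k) j ^+ 2
          = \sum_k (\row_k col j C (lift ord_max k) 0) 0 k ^+ 2.
  exact: affine_jump_sqr_grad_ge (v_Bn j) (v_Bn i) jump.
by apply: eq_bigr => k _; rewrite !mxE.
Qed.

Lemma proj_norm_ge_half_sqrt : ((1 / 2 * Num.sqrt n%:R)%:E <= proj_norm v)%E.
Proof.
have [s s1 le_signed] := exists_signs_sum_sqr_ge (fun j k => C (lift ord_max k) j).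
set c := C *m \col_j s j.
have vals i : affine_of_col c (v i) = s i.
  by rewrite affine_of_col_vertex mulmxA MC mul1mx mxE.
have [z Bz grad_le] :=
  exists_Bn_affine_ge_enorm (\row_k c (lift ord_max k) 0) (c ord_max 0).
have vals_le1 j : `|affine_of_col c (v j)| <= 1 by rewrite vals s1.
apply: (@le_trans _ _ (`|affine_of_col c z|)%:E); last exact: proj_norm_ge.
rewrite lee_fin (le_trans _ grad_le) // ler_sqrtr_of_sqr ?mulr_ge0 ?sqrtr_ge0 //.
rewrite exprMn sqr_sqrtr //.
have -> : \sum_k (\row_k c (lift ord_max k) 0) 0 k ^+ 2
          = \sum_k (\sum_j s j * C (lift ord_max k) j) ^+ 2.
  apply: eq_bigr => k _; rewrite !mxE; congr (_ ^+ 2).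
  by apply: eq_bigr => j _; rewrite mxE mulrC.
apply: le_trans le_signed.
apply: le_trans (ler_sum _ (fun j _ => lagrange_sqr_grad_ge j)).
rewrite sumr_const card_ord mulrS -mulr_natr; lra.
Qed.

End LowerBound.

Section UpperBound.
Context {R : realType} {n : nat}.

Definition std_simplex (j : 'I_n.+1) : 'rV[R]_n :=
  if unlift ord_max j is Some k then delta_mx 0 k else 0.

Lemma std_simplex_lift k : std_simplex (lift ord_max k) = delta_mx 0 k.
Proof. by rewrite /std_simplex liftK. Qed.

Lemma std_simplex_max : std_simplex ord_max = 0.
Proof. by rewrite /std_simplex unlift_none. Qed.

Lemma std_simplex_Bn j : Bn (std_simplex j).
Proof.
rewrite BnE; case: (unliftP ord_max j) => [k|] ->; last first.
  by rewrite std_simplex_max big1 // => i _; rewrite mxE expr0n.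
rewrite std_simplex_lift (bigD1 k) //= big1 => [|i ik]; rewrite !mxE ?eqxx.
  by rewrite expr1n addr0.
by rewrite (negbTE ik) expr0n.
Qed.

Lemma std_simplex_nondegenerate : Defs.nondegenerate std_simplex.
Proof.
have trig : is_trig_mx (simplex_matrix std_simplex)^T.
  apply/is_trig_mxP => i j lt_ij; rewrite !mxE.
  case: (unliftP ord_max i) => [k i_k|i_max]; last first.
    by move: lt_ij; rewrite i_max ltnNge leq_ord.
  case: (unliftP ord_max j) => [k' j_k'|->]; last by rewrite std_simplex_max mxE.
  rewrite j_k' std_simplex_lift mxE /=.
  by case: eqP => // k_k'; move: lt_ij; rewrite i_k j_k' k_k' ltnn.
rewrite /Defs.nondegenerate -det_tr det_trig // big1 ?oner_neq0 // => i _.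
rewrite !mxE; case: (unliftP ord_max i) => [k ->|//].
by rewrite std_simplex_lift mxE !eqxx.
Qed.

Lemma affine_fun_std_simplex_max a b : affine_fun a b (std_simplex ord_max) = b.
Proof. by rewrite /affine_fun std_simplex_max big1 ?add0r // => k _; rewrite mxE mulr0. Qed.

Lemma affine_fun_std_simplex_lift a b k :
  affine_fun a b (std_simplex (lift ord_max k)) = a 0 k + b.
Proof.
rewrite /affine_fun std_simplex_lift (bigD1 k) //= big1 => [|i ik].
  by rewrite addr0 mxE !eqxx mulr1.
by rewrite mxE (negbTE ik) mulr0.
Qed.

Lemma proj_norm_std_simplex_le :
  (proj_norm std_simplex <= (1 + 2 * Num.sqrt n%:R)%:E)%E.
Proof.
apply: ge_ereal_sup => _ [f [a [b [z [_ f_le1 f_interp Bz ->]]]]].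
have f_vert j : `|f (std_simplex j)| <= 1 := f_le1 _ (std_simplex_Bn j).
have b_le1 : `|b| <= 1.
  by rewrite -(affine_fun_std_simplex_max a b) f_interp.
have a_le2 k : `|a 0 k| <= 2.
  have -> : a 0 k = f (std_simplex (lift ord_max k)) - f (std_simplex ord_max).
    by rewrite -!f_interp affine_fun_std_simplex_lift affine_fun_std_simplex_max addrK.
  apply: le_trans (ler_normB _ _) _.
  by have := f_vert (lift ord_max k); have := f_vert ord_max; lra.
rewrite lee_fin /affine_fun addrC; apply: le_trans (ler_normD _ _) _.
apply: lerD => //; apply: le_trans (ler_norm_sum _ _ _) _.
apply: (@le_trans _ _ (2 * \sum_i `|z 0 i|)).
  by rewrite mulr_sumr; apply: ler_sum => i _; rewrite normrM ler_wpM2r.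
rewrite ler_pM2l // (le_trans (sum_norm_le_sqrt_enorm z)) //.
by rewrite ler_piMr ?sqrtr_ge0.
Qed.

End UpperBound.

Theorem corollary4 (R : realType) :
  exists c1 c2 : R, 0 < c1 /\ 0 < c2 /\
    forall n : nat, (0 < n)%N ->
      ((c1 * Num.sqrt (n%:R))%:E <= theta R n)%E /\
      (theta R n <= (c2 * Num.sqrt (n%:R))%:E)%E.
Proof.
exists (1 / 2), 3; split; first by lra.
split; first by lra.
move=> n n_gt0; split.
  apply: le_ereal_inf_tmp => _ [v [v_Bn v_nondeg] <-].
  exact: proj_norm_ge_half_sqrt.
apply: ge_ereal_inf; exists (proj_norm (@std_simplex R n)).
  exists std_simplex => //.
  by split; [exact: std_simplex_Bn | exact: std_simplex_nondegenerate].
apply: le_trans proj_norm_std_simplex_le _.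
have sqrt_ge1 : 1 <= Num.sqrt (n%:R : R) by rewrite ler_sqrtr_of_sqr // expr1n ler1n.
by rewrite lee_fin; lra.
Qed.
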